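(* Let $a<b$, $0<\epsilon<\min\{1,b-a\}$ and $f\in C^1([a,b])$. Let $\sigma=\tanh$, $\beta=-3\ln(\epsilon)/\epsilon$, $$\rho_\epsilon(x)=\frac{\sigma(\beta(x+\epsilon^2))-\sigma(\beta(x-\epsilon^2))}{2\epsilon^2},\qquad \omega(t)=\sigma\bigl(\beta(t-\max\{a,t-\epsilon\})\bigr)-\sigma\bigl(\beta(t-\min\{b,t+\epsilon\})\bigr).$$ Then for all $t\in[a,b]$ one has $1-\epsilon\le\omega(t)\le2$ and $$\Bigl|\int_a^b f(s)\rho_\epsilon(t-s)\,ds-\omega(t)f(t)\Bigr|\le 20\|f\|_{C^1([a,b])}\,(b-a-\ln\epsilon)\,\epsilon.$$
   Context: $\|f\|_{C^1([a,b])}=\|f\|_{L^\infty([a,b])}+\|f'\|_{L^\infty([a,b])}$. *)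

From Stdlib Require Import Reals.
From Coquelicot Require Import Coquelicot.
Open Scope R_scope.

Definition tanh (x : R) : R := (exp x - exp (- x)) / (exp x + exp (- x)).

Definition is_C1_on (a b : R) (f f' : R -> R) : Prop :=
  (forall x, a <= x <= b ->
     filterlim (fun h => (f (x + h) - f x) / h)
       (within (fun h => h <> 0 /\ a <= x + h <= b) (locally 0))
       (locally (f' x))) /\
  (forall x, a <= x <= b ->
     filterlim f' (within (fun y => a <= y <= b) (locally x)) (locally (f' x))).

Definition Linf_norm (a b : R) (g : R -> R) : R :=
  real (Lub_Rbar (fun y => exists x, a <= x <= b /\ y = Rabs (g x))).

Definition C1_norm (a b : R) (f f' : R -> R) : R :=
  Linf_norm a b f + Linf_norm a b f'.

Definition beta_eps (eps : R) : R := - 3 * ln eps / eps.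

Definition rho_eps (eps x : R) : R :=
  (tanh (beta_eps eps * (x + eps ^ 2)) - tanh (beta_eps eps * (x - eps ^ 2)))
  / (2 * eps ^ 2).

Definition omega (a b eps t : R) : R :=
  tanh (beta_eps eps * (t - Rmax a (t - eps)))
  - tanh (beta_eps eps * (t - Rmin b (t + eps))).

(* The kernel [rho_eps] is the derivative of
   [Phi x = (G (x + eps^2) - G (x - eps^2)) / (2 eps^2)], [G y = ln (2 cosh (beta y)) / beta],
   so its mass on [[a, b]] is [Phi (t - a) - Phi (t - b)].  By the mean value theorem [Phi x]
   lies between [tanh (beta (x - eps^2))] and [tanh (beta (x + eps^2))], hence within
   [2 beta eps^2 = 6 |ln eps| eps] of [tanh (beta x)]; and [tanh (beta eps) >= 1 - eps], so
   truncating [x] at [eps] costs at most [eps].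
   This makes the mass equal to [omega t] up to [O(|ln eps| eps)].  The remaining part
   [int (f s - f t) rho_eps (t - s) ds] is small because [|f s - f t| <= ||f'|| eps] where
   [|t - s| <= eps], while [rho_eps <= 3 eps] where [|t - s| >= eps]. *)

From Stdlib Require Import Reals Lra.
From Coquelicot Require Import Coquelicot.
Open Scope R_scope.

Lemma exp_le_compat x y : x <= y -> exp x <= exp y.
Proof. intros [H | ->]; [left; now apply exp_increasing | right; reflexivity]. Qed.

Lemma tanh_logistic x : tanh x = 1 - 2 / (exp (2 * x) + 1).
Proof.
  unfold tanh.
  assert (E2 : exp (2 * x) = exp x * exp x) by (rewrite <- exp_plus; f_equal; ring).
  rewrite E2, exp_Ropp. pose proof (exp_pos x). field. nra.
Qed.

Lemma tanh_lt_1 x : tanh x < 1.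
Proof.
  rewrite tanh_logistic. pose proof (exp_pos (2 * x)).
  assert (0 < 2 / (exp (2 * x) + 1)) by (apply Rdiv_lt_0_compat; lra). lra.
Qed.

Lemma tanh_neg x : tanh (- x) = - tanh x.
Proof.
  unfold tanh. rewrite Ropp_involutive.
  pose proof (exp_pos x). pose proof (exp_pos (- x)). field. lra.
Qed.

Lemma tanh_gt_m1 x : -1 < tanh x.
Proof. pose proof (tanh_lt_1 (- x)). rewrite tanh_neg in H. lra. Qed.

Lemma tanh_le_compat x y : x <= y -> tanh x <= tanh y.
Proof.
  intros Hxy. rewrite !tanh_logistic.
  assert (exp (2 * x) <= exp (2 * y)) by (apply exp_le_compat; lra).
  pose proof (exp_pos (2 * x)).
  assert (2 / (exp (2 * y) + 1) <= 2 / (exp (2 * x) + 1)).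
  { apply Rmult_le_compat_l; [lra|]. apply Rinv_le_contravar; lra. }
  lra.
Qed.

Lemma tanh_nonneg x : 0 <= x -> 0 <= tanh x.
Proof.
  intros Hx. replace 0 with (tanh 0) at 1.
  - now apply tanh_le_compat.
  - unfold tanh. rewrite Ropp_0, Rminus_diag. apply Rdiv_0_l.
Qed.

Lemma is_derive_tanh x : is_derive tanh x (1 - tanh x ^ 2).
Proof.
  unfold tanh. pose proof (exp_pos x). pose proof (exp_pos (- x)).
  auto_derive; [lra|]. field. lra.
Qed.

Lemma tanh_sub_le x y : x <= y -> tanh y - tanh x <= y - x.
Proof.
  intros Hxy.
  destruct (MVT_gen tanh x y (fun z => 1 - tanh z ^ 2)) as [c [_ ->]].
  - intros z _. apply is_derive_tanh.
  - intros z _. apply continuity_pt_filterlim, (ex_derive_continuous tanh).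
    eexists; apply is_derive_tanh.
  - pose proof (pow2_ge_0 (tanh c)). nra.
Qed.

(* In the variables p = e^{2x}, q = e^{2y} the defect is (p-1)(q-1)(pq-1) / ((p+1)(q+1)(pq+1)). *)
Lemma tanh_plus_le x y : 0 <= x -> 0 <= y -> tanh (x + y) <= tanh x + tanh y.
Proof.
  intros Hx Hy. rewrite !tanh_logistic.
  replace (2 * (x + y)) with (2 * x + 2 * y) by ring. rewrite exp_plus.
  assert (Hp : 1 <= exp (2 * x)) by (rewrite <- exp_0; apply exp_le_compat; lra).
  assert (Hq : 1 <= exp (2 * y)) by (rewrite <- exp_0; apply exp_le_compat; lra).
  set (p := exp (2 * x)) in *. set (q := exp (2 * y)) in *.
  apply Rminus_le_0.
  replace (1 - 2 / (p + 1) + (1 - 2 / (q + 1)) - (1 - 2 / (p * q + 1)))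
    with ((p - 1) * (q - 1) * (p * q - 1) / ((p + 1) * (q + 1) * (p * q + 1)))
    by (field; nra).
  apply Rdiv_le_0_compat.
  - apply Rmult_le_pos; [apply Rmult_le_pos|]; nra.
  - assert (0 < p * q) by nra. apply Rmult_lt_0_compat; nra.
Qed.

Lemma one_minus_tanh_le x : 1 - tanh x <= 2 * exp (- (2 * x)).
Proof.
  rewrite tanh_logistic, exp_Ropp. pose proof (exp_pos (2 * x)).
  replace (1 - (1 - 2 / (exp (2 * x) + 1))) with (2 * / (exp (2 * x) + 1)) by (field; lra).
  apply Rmult_le_compat_l; [lra|]. apply Rinv_le_contravar; lra.
Qed.

Definition tanh_primitive (c y : R) : R := ln (exp (c * y) + exp (- (c * y))) / c.

Definition rho_primitive (eps x : R) : R :=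
  (tanh_primitive (beta_eps eps) (x + eps ^ 2) - tanh_primitive (beta_eps eps) (x - eps ^ 2))
  / (2 * eps ^ 2).

Lemma tanh_primitive_neg c y : tanh_primitive c (- y) = tanh_primitive c y.
Proof.
  unfold tanh_primitive.
  replace (c * - y) with (- (c * y)) by ring. now rewrite Ropp_involutive, Rplus_comm.
Qed.

Lemma is_derive_tanh_primitive c y : c <> 0 -> is_derive (tanh_primitive c) y (tanh (c * y)).
Proof.
  intros Hc. unfold tanh_primitive, tanh.
  pose proof (exp_pos (c * y)). pose proof (exp_pos (- (c * y))).
  auto_derive; [lra|]. field. lra.
Qed.

Section Kernel.

Variable eps : R.
Hypothesis eps_pos : 0 < eps.
Hypothesis eps_lt_1 : eps < 1.

Local Notation B := (beta_eps eps).
Local Notation L := (- ln eps).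

Lemma ln_eps_opp_pos : 0 < L.
Proof. pose proof (ln_increasing eps 1 eps_pos eps_lt_1). rewrite ln_1 in H. lra. Qed.

Lemma exp_ln_eps_opp : exp L = / eps.
Proof. rewrite exp_Ropp, exp_ln; lra. Qed.

Lemma ln_eps_opp_ge : 1 - eps <= L.
Proof. pose proof (exp_ineq1_le (ln eps)). rewrite exp_ln in H; lra. Qed.

Lemma eps_mul_ln_eps_opp_le : eps * L <= 1 - eps.
Proof.
  pose proof (exp_ineq1_le L). rewrite exp_ln_eps_opp in H.
  apply (Rmult_le_compat_l eps) in H; [|lra].
  rewrite Rinv_r in H; lra.
Qed.

Lemma beta_eps_mul_eps : B * eps = 3 * L.
Proof. unfold beta_eps. field. lra. Qed.

Lemma beta_eps_pos : 0 < B.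
Proof.
  pose proof ln_eps_opp_pos. apply (Rmult_lt_reg_r eps); [lra|].
  rewrite beta_eps_mul_eps. lra.
Qed.

Lemma tanh_beta_eps_ge : 1 - eps <= tanh (B * eps).
Proof.
  rewrite beta_eps_mul_eps, tanh_logistic. pose proof ln_eps_opp_pos.
  assert (Hu : / eps * / eps <= exp (2 * (3 * L))).
  { rewrite <- exp_ln_eps_opp, <- exp_plus. apply exp_le_compat. lra. }
  set (u := exp (2 * (3 * L))) in *.
  assert (Hv : eps * / eps = 1) by (field; lra).
  assert (0 < / eps) by (apply Rinv_0_lt_compat; lra).
  assert (2 <= eps * (u + 1)) by nra.
  assert (2 / (u + 1) <= eps).
  { apply (Rmult_le_reg_r (u + 1)); [nra|]. unfold Rdiv.
    rewrite Rmult_assoc, Rinv_l by nra. lra. }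
  lra.
Qed.

Lemma ln_eps_opp_mul_le_1 : L * (6 * eps - 3) <= 1.
Proof.
  pose proof ln_eps_opp_pos. pose proof eps_mul_ln_eps_opp_le.
  destruct (Rle_dec (6 * eps - 3) 0); [nra|].
  assert (L * (6 * eps - 3) * eps <= (1 - eps) * (6 * eps - 3)) by nra.
  nra.
Qed.

(* [-2 B (eps - eps^2) = L (6 eps - 3) - 3 L], with [e^{-3L} = eps^3] and [L (6 eps - 3) <= 1]. *)
Lemma exp_tail_le : 2 * exp (- (2 * (B * (eps - eps ^ 2)))) <= 6 * eps ^ 3.
Proof.
  replace (- (2 * (B * (eps - eps ^ 2)))) with (L * (6 * eps - 3) + - L + - L + - L)
    by (replace (B * (eps - eps ^ 2)) with (B * eps * (1 - eps)) by ring;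
        rewrite beta_eps_mul_eps; ring).
  rewrite !exp_plus, Ropp_involutive, exp_ln by lra.
  assert (exp (L * (6 * eps - 3)) <= 3).
  { eapply Rle_trans; [apply exp_le_compat, ln_eps_opp_mul_le_1 | apply exp_le_3]. }
  assert (0 < eps ^ 3) by (apply pow_lt; lra).
  simpl in *. nra.
Qed.

Lemma rho_nonneg x : 0 <= rho_eps eps x.
Proof.
  unfold rho_eps. pose proof beta_eps_pos. assert (0 < eps ^ 2) by (apply pow_lt; lra).
  apply Rdiv_le_0_compat; [|lra].
  assert (tanh (B * (x - eps ^ 2)) <= tanh (B * (x + eps ^ 2)))
    by (apply tanh_le_compat, Rmult_le_compat_l; lra).
  lra.
Qed.

Lemma rho_neg x : rho_eps eps (- x) = rho_eps eps x.
Proof.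
  unfold rho_eps.
  replace (B * (- x + eps ^ 2)) with (- (B * (x - eps ^ 2))) by ring.
  replace (B * (- x - eps ^ 2)) with (- (B * (x + eps ^ 2))) by ring.
  rewrite !tanh_neg. field. lra.
Qed.

Lemma rho_le_of_ge_eps x : eps <= x -> rho_eps eps x <= 3 * eps.
Proof.
  intros Hx. unfold rho_eps. pose proof beta_eps_pos.
  assert (0 < eps ^ 2) by (apply pow_lt; lra).
  pose proof (tanh_lt_1 (B * (x + eps ^ 2))).
  assert (tanh (B * (eps - eps ^ 2)) <= tanh (B * (x - eps ^ 2)))
    by (apply tanh_le_compat, Rmult_le_compat_l; lra).
  pose proof (one_minus_tanh_le (B * (eps - eps ^ 2))). pose proof exp_tail_le.
  apply (Rmult_le_reg_r (2 * eps ^ 2)); [lra|].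
  unfold Rdiv. rewrite Rmult_assoc, Rinv_l by lra. simpl in *. nra.
Qed.

Lemma rho_tail x : eps <= Rabs x -> rho_eps eps x <= 3 * eps.
Proof.
  intros Hx. destruct (Rle_dec 0 x).
  - rewrite Rabs_right in Hx by lra. now apply rho_le_of_ge_eps.
  - rewrite Rabs_left in Hx by lra. rewrite <- rho_neg. apply rho_le_of_ge_eps. lra.
Qed.

Lemma is_derive_rho_primitive x : is_derive (rho_primitive eps) x (rho_eps eps x).
Proof.
  pose proof beta_eps_pos. assert (0 < eps ^ 2) by (apply pow_lt; lra).
  unfold rho_primitive, rho_eps, tanh_primitive, tanh.
  set (h := eps ^ 2) in *. unfold Rminus.
  auto_derive.
  - repeat split; apply Rplus_lt_0_compat; apply exp_pos.
  - field. repeat split; try lra; apply Rgt_not_eq, Rplus_lt_0_compat; apply exp_pos.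
Qed.

Lemma continuous_rho_sub t x : continuous (fun s => rho_eps eps (t - s)) x.
Proof.
  apply (ex_derive_continuous (fun s => rho_eps eps (t - s))).
  unfold rho_eps, tanh.
  auto_derive. repeat split; apply Rgt_not_eq, Rplus_lt_0_compat; apply exp_pos.
Qed.

Lemma is_RInt_rho t a b :
  is_RInt (fun s => rho_eps eps (t - s)) a b
    (rho_primitive eps (t - a) - rho_primitive eps (t - b)).
Proof.
  replace (rho_primitive eps (t - a) - rho_primitive eps (t - b))
    with (minus (- rho_primitive eps (t - b)) (- rho_primitive eps (t - a)))
    by (unfold minus, plus, opp; simpl; ring).
  apply (is_RInt_derive (fun s => - rho_primitive eps (t - s))); intros s _.
  - replace (rho_eps eps (t - s)) with (opp (scal (-1) (rho_eps eps (t - s))))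
      by (unfold opp, scal; simpl; unfold mult; simpl; ring).
    apply (is_derive_opp (fun s => rho_primitive eps (t - s))).
    apply (is_derive_comp (rho_primitive eps)).
    + apply is_derive_rho_primitive.
    + auto_derive; [easy | ring].
  - apply continuous_rho_sub.
Qed.

Lemma rho_primitive_between x :
  tanh (B * (x - eps ^ 2)) <= rho_primitive eps x <= tanh (B * (x + eps ^ 2)).
Proof.
  pose proof beta_eps_pos. assert (0 < eps ^ 2) by (apply pow_lt; lra).
  destruct (MVT_gen (tanh_primitive B) (x - eps ^ 2) (x + eps ^ 2) (fun y => tanh (B * y)))
    as [c [Hc E]].
  - intros y _. apply is_derive_tanh_primitive. lra.
  - intros y _. apply continuity_pt_filterlim, (ex_derive_continuous (tanh_primitive B)).
    eexists; apply is_derive_tanh_primitive; lra.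
  - rewrite Rmin_left, Rmax_right in Hc by lra.
    unfold rho_primitive. rewrite E.
    replace (tanh (B * c) * (x + eps ^ 2 - (x - eps ^ 2)) / (2 * eps ^ 2)) with (tanh (B * c))
      by (field; lra).
    split; apply tanh_le_compat, Rmult_le_compat_l; lra.
Qed.

Lemma rho_primitive_neg x : rho_primitive eps (- x) = - rho_primitive eps x.
Proof.
  unfold rho_primitive.
  replace (- x + eps ^ 2) with (- (x - eps ^ 2)) by ring.
  replace (- x - eps ^ 2) with (- (x + eps ^ 2)) by ring.
  rewrite !tanh_primitive_neg. field. lra.
Qed.

Lemma abs_rho_primitive_le_1 x : Rabs (rho_primitive eps x) <= 1.
Proof.
  pose proof (rho_primitive_between x).
  pose proof (tanh_lt_1 (B * (x + eps ^ 2))). pose proof (tanh_gt_m1 (B * (x - eps ^ 2))).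
  apply Rabs_le. lra.
Qed.

Lemma rho_mass_le_2 x y : rho_primitive eps x - rho_primitive eps y <= 2.
Proof.
  pose proof (abs_rho_primitive_le_1 x) as Hx. pose proof (abs_rho_primitive_le_1 y) as Hy.
  apply Rabs_le_between in Hx, Hy. lra.
Qed.

Lemma abs_rho_primitive_sub_tanh x : Rabs (rho_primitive eps x - tanh (B * x)) <= 6 * L * eps.
Proof.
  pose proof beta_eps_pos. assert (0 < eps ^ 2) by (apply pow_lt; lra).
  pose proof (rho_primitive_between x).
  assert (tanh (B * (x - eps ^ 2)) <= tanh (B * x) <= tanh (B * (x + eps ^ 2)))
    by (split; apply tanh_le_compat, Rmult_le_compat_l; lra).
  assert (Hspread : tanh (B * (x + eps ^ 2)) - tanh (B * (x - eps ^ 2)) <= 6 * L * eps).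
  { eapply Rle_trans; [apply tanh_sub_le, Rmult_le_compat_l; lra|].
    replace (B * (x + eps ^ 2) - B * (x - eps ^ 2)) with (2 * (B * eps) * eps) by ring.
    rewrite beta_eps_mul_eps. lra. }
  apply Rabs_le. lra.
Qed.

Lemma abs_tanh_sub_saturated x : 0 <= x -> Rabs (tanh (B * x) - tanh (B * Rmin x eps)) <= eps.
Proof.
  intros Hx. pose proof beta_eps_pos. destruct (Rle_dec x eps).
  - rewrite Rmin_left, Rminus_diag, Rabs_R0 by lra. lra.
  - rewrite Rmin_right by lra.
    pose proof tanh_beta_eps_ge. pose proof (tanh_lt_1 (B * x)).
    assert (tanh (B * eps) <= tanh (B * x)) by (apply tanh_le_compat, Rmult_le_compat_l; lra).
    apply Rabs_le. lra.
Qed.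

Lemma abs_rho_primitive_sub_saturated x :
  0 <= x -> Rabs (rho_primitive eps x - tanh (B * Rmin x eps)) <= 6 * L * eps + eps.
Proof.
  intros Hx.
  replace (rho_primitive eps x - tanh (B * Rmin x eps))
    with ((rho_primitive eps x - tanh (B * x)) + (tanh (B * x) - tanh (B * Rmin x eps)))
    by ring.
  eapply Rle_trans; [apply Rabs_triang|].
  pose proof (abs_rho_primitive_sub_tanh x). pose proof (abs_tanh_sub_saturated x Hx). lra.
Qed.

Lemma omega_tanh_sum a b t :
  omega a b eps t = tanh (B * Rmin (t - a) eps) + tanh (B * Rmin (b - t) eps).
Proof.
  unfold omega.
  replace (t - Rmax a (t - eps)) with (Rmin (t - a) eps)
    by (unfold Rmin, Rmax; repeat destruct Rle_dec; lra).
  replace (B * (t - Rmin b (t + eps))) with (- (B * Rmin (b - t) eps))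
    by (unfold Rmin; repeat destruct Rle_dec; solve [ring | lra]).
  rewrite tanh_neg. ring.
Qed.

(* Both saturation lengths are [<= eps]; if neither equals [eps] they add up to [b - a > eps]. *)
Lemma omega_bounds a b t : a <= t <= b -> eps < b - a -> 1 - eps <= omega a b eps t <= 2.
Proof.
  intros Ht Hba. rewrite omega_tanh_sum. pose proof beta_eps_pos. pose proof tanh_beta_eps_ge.
  set (m1 := Rmin (t - a) eps). set (m2 := Rmin (b - t) eps).
  assert (Hm1 : 0 <= m1 /\ (m1 = eps \/ m1 = t - a)) by (unfold m1, Rmin; destruct Rle_dec; lra).
  assert (Hm2 : 0 <= m2 /\ (m2 = eps \/ m2 = b - t)) by (unfold m2, Rmin; destruct Rle_dec; lra).
  pose proof (tanh_lt_1 (B * m1)). pose proof (tanh_lt_1 (B * m2)).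
  assert (0 <= tanh (B * m1)) by (apply tanh_nonneg; nra).
  assert (0 <= tanh (B * m2)) by (apply tanh_nonneg; nra).
  split; [|lra].
  destruct Hm1 as [Hm1 [E1 | E1]]; [rewrite E1; lra|].
  destruct Hm2 as [Hm2 [E2 | E2]]; [rewrite E2; lra|].
  assert (tanh (B * eps) <= tanh (B * m1 + B * m2))
    by (apply tanh_le_compat; rewrite E1, E2; nra).
  assert (tanh (B * m1 + B * m2) <= tanh (B * m1) + tanh (B * m2))
    by (apply tanh_plus_le; nra).
  lra.
Qed.

Lemma abs_rho_mass_sub_omega a b t :
  a <= t <= b ->
  Rabs (rho_primitive eps (t - a) - rho_primitive eps (t - b) - omega a b eps t)
    <= 2 * (6 * L * eps + eps).
Proof.
  intros Ht. rewrite omega_tanh_sum.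
  replace (t - b) with (- (b - t)) by ring. rewrite rho_primitive_neg.
  pose proof (abs_rho_primitive_sub_saturated (t - a)).
  pose proof (abs_rho_primitive_sub_saturated (b - t)).
  replace (rho_primitive eps (t - a) - - rho_primitive eps (b - t)
           - (tanh (B * Rmin (t - a) eps) + tanh (B * Rmin (b - t) eps)))
    with ((rho_primitive eps (t - a) - tanh (B * Rmin (t - a) eps))
          + (rho_primitive eps (b - t) - tanh (B * Rmin (b - t) eps))) by ring.
  eapply Rle_trans; [apply Rabs_triang|].
  assert (0 <= t - a) by lra. assert (0 <= b - t) by lra. intuition lra.
Qed.

End Kernel.

(* Composing with [clamp a b] turns a function continuous on [[a, b]] into one continuous on
   all of [R], to which the global integrability and mean value theorems apply. *)
Definition clamp (a b x : R) : R := Rmax a (Rmin b x).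

Section Interval.

Variables a b : R.
Hypothesis a_le_b : a <= b.

Local Notation I := (fun y => a <= y <= b).

Lemma clamp_in x : a <= clamp a b x <= b.
Proof. unfold clamp, Rmax, Rmin. repeat destruct Rle_dec; lra. Qed.

Lemma clamp_id x : a <= x <= b -> clamp a b x = x.
Proof. unfold clamp, Rmax, Rmin. repeat destruct Rle_dec; lra. Qed.

Lemma Rabs_clamp_sub_le x y : Rabs (clamp a b y - clamp a b x) <= Rabs (y - x).
Proof. unfold clamp, Rmax, Rmin, Rabs. repeat destruct Rle_dec; repeat destruct Rcase_abs; lra. Qed.

Lemma continuous_clamp_comp (k : R -> R) :
  continuous_on I k -> forall x, continuous (fun y => k (clamp a b y)) x.
Proof.
  intros Hk x. apply (filterlim_comp _ _ _ (clamp a b) k _ (within I (locally (clamp a b x)))).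
  - intros P [d Hd]. exists d. intros y Hy. apply Hd; [|apply clamp_in].
    apply (Rle_lt_trans _ _ _ (Rabs_clamp_sub_le x y) Hy).
  - apply Hk, clamp_in.
Qed.

Lemma ex_RInt_sub_mul (g k : R -> R) c :
  continuous_on I g -> (forall x, continuous k x) -> ex_RInt (fun s => (g s - c) * k s) a b.
Proof.
  intros Hg Hk.
  apply (ex_RInt_ext (fun s => (g (clamp a b s) - c) * k s)).
  { intros x Hx. rewrite Rmin_left, Rmax_right in Hx by lra. rewrite clamp_id; lra. }
  apply (ex_RInt_continuous (V := R_CompleteNormedModule)). intros z _.
  apply (continuous_mult (fun s => g (clamp a b s) - c) k); [|apply Hk].
  apply (continuous_minus (fun s => g (clamp a b s)) (fun _ => c));
    [apply continuous_clamp_comp, Hg | apply continuous_const].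
Qed.

Lemma Linf_norm_spec (k : R -> R) :
  continuous_on I k ->
  0 <= Linf_norm a b k /\ forall x, a <= x <= b -> Rabs (k x) <= Linf_norm a b k.
Proof.
  intros Hk.
  destruct (continuity_ab_maj (fun y => Rabs (k (clamp a b y))) a b a_le_b) as [x0 [Hmax Hx0]].
  { intros c _. apply (continuity_pt_comp (fun y => k (clamp a b y)) Rabs).
    - apply continuity_pt_filterlim, continuous_clamp_comp, Hk.
    - apply Rcontinuity_abs. }
  rewrite clamp_id in Hmax by exact Hx0.
  assert (Hmax' : forall x, a <= x <= b -> Rabs (k x) <= Rabs (k x0)).
  { intros x Hx. specialize (Hmax x Hx). now rewrite clamp_id in Hmax. }
  replace (Linf_norm a b k) with (Rabs (k x0)).
  - split; [apply Rabs_pos | exact Hmax'].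
  - unfold Linf_norm. rewrite (is_lub_Rbar_unique _ (Finite (Rabs (k x0)))); [reflexivity|].
    split.
    + intros y [x [Hx ->]]. now apply Hmax'.
    + intros l Hl. apply Hl. exists x0. split; [exact Hx0 | reflexivity].
Qed.

End Interval.

Section C1.

Variables (a b : R) (f f' : R -> R).
Hypothesis a_lt_b : a < b.
Hypothesis f_C1 : is_C1_on a b f f'.

Local Notation I := (fun y => a <= y <= b).

Lemma C1_locally_lipschitz x :
  a <= x <= b ->
  exists d : posreal, forall y, a <= y <= b -> Rabs (y - x) < d ->
    Rabs (f y - f x) <= (Rabs (f' x) + 1) * Rabs (y - x).
Proof.
  intros Hx. destruct f_C1 as [Hd _].
  destruct (Hd x Hx _ (locally_ball (f' x) (mkposreal 1 Rlt_0_1))) as [d Hd1].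
  exists d. intros y Hy Hyx.
  destruct (Req_dec y x) as [-> | Hne]; [rewrite !Rminus_diag, Rabs_R0; lra|].
  assert (Hq : Rabs ((f y - f x) / (y - x) - f' x) < 1).
  { assert (Hball : Rabs (y - x - 0) < d) by (now rewrite Rminus_0_r).
    assert (HD : y - x <> 0 /\ a <= x + (y - x) <= b)
      by (split; [lra | now replace (x + (y - x)) with y by ring]).
    specialize (Hd1 (y - x) Hball HD). simpl in Hd1.
    now replace (x + (y - x)) with y in Hd1 by ring. }
  replace (f y - f x) with ((f y - f x) / (y - x) * (y - x)) by (field; lra).
  rewrite Rabs_mult. apply Rmult_le_compat_r; [apply Rabs_pos|].
  replace ((f y - f x) / (y - x)) with (((f y - f x) / (y - x) - f' x) + f' x) by ring.
  eapply Rle_trans; [apply Rabs_triang | lra].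
Qed.

Lemma continuous_on_C1 : continuous_on I f.
Proof.
  intros x Hx. destruct (C1_locally_lipschitz x Hx) as [d Hd].
  set (K := Rabs (f' x) + 1).
  assert (HK : 0 < K) by (unfold K; pose proof (Rabs_pos (f' x)); lra).
  apply filterlim_locally. intros e.
  assert (Hde : 0 < Rmin d (e / K))
    by (apply Rmin_pos; [apply cond_pos | apply Rdiv_lt_0_compat; [apply cond_pos | lra]]).
  exists (mkposreal _ Hde). intros y Hy HyI. change R in y.
  change (Rabs (y - x) < Rmin d (e / K)) in Hy. change (Rabs (f y - f x) < e).
  pose proof (Rmin_l d (e / K)). pose proof (Rmin_r d (e / K)).
  eapply Rle_lt_trans; [apply Hd; [exact HyI | lra]|].
  replace (pos e) with (K * (e / K)) by (field; lra).
  apply Rmult_lt_compat_l; lra.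
Qed.

Lemma is_derive_clamp_comp x : a < x < b -> is_derive (fun y => f (clamp a b y)) x (f' x).
Proof.
  intros Hx. apply is_derive_Reals. intros e He.
  destruct f_C1 as [Hd _].
  destruct (Hd x ltac:(lra) _ (locally_ball (f' x) (mkposreal e He))) as [d Hd1].
  assert (Hpos : 0 < Rmin d (Rmin (x - a) (b - x)))
    by (apply Rmin_pos; [apply cond_pos | apply Rmin_pos; lra]).
  exists (mkposreal _ Hpos). intros h Hh0 Hh. simpl in Hh.
  pose proof (Rmin_l d (Rmin (x - a) (b - x))). pose proof (Rmin_r d (Rmin (x - a) (b - x))).
  pose proof (Rmin_l (x - a) (b - x)). pose proof (Rmin_r (x - a) (b - x)).
  assert (Hin : a <= x + h <= b) by (apply Rabs_lt_between in Hh; lra).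
  rewrite !clamp_id by lra.
  apply Hd1; [change (Rabs (h - 0) < d); rewrite Rminus_0_r; lra | split; assumption].
Qed.

Lemma C1_lipschitz x y :
  a <= x <= b -> a <= y <= b -> Rabs (f y - f x) <= Linf_norm a b f' * Rabs (y - x).
Proof.
  intros Hx Hy. destruct f_C1 as [_ Hc'].
  destruct (Linf_norm_spec a b ltac:(lra) f' Hc') as [_ Hbound].
  assert (Hmin : a <= Rmin x y) by (apply Rmin_glb; lra).
  assert (Hmax : Rmax x y <= b) by (apply Rmax_lub; lra).
  destruct (MVT_gen (fun z => f (clamp a b z)) x y f') as [c [Hc E]].
  - intros z Hz. apply is_derive_clamp_comp. lra.
  - intros z _. apply continuity_pt_filterlim, continuous_clamp_comp, continuous_on_C1. lra.
  - rewrite !clamp_id in E by lra. rewrite E, Rabs_mult.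
    apply Rmult_le_compat_r; [apply Rabs_pos | apply Hbound; lra].
Qed.

End C1.

Section Estimate.

Variables (a b eps : R) (f f' : R -> R).
Hypothesis a_lt_b : a < b.
Hypothesis eps_pos : 0 < eps.
Hypothesis eps_lt_1 : eps < 1.
Hypothesis f_C1 : is_C1_on a b f f'.

Local Notation M := (Linf_norm a b f).
Local Notation M' := (Linf_norm a b f').
Local Notation rho_mass t := (rho_primitive eps (t - a) - rho_primitive eps (t - b)).

(* Near [t] use the Lipschitz bound on [f], away from [t] the tail bound on [rho_eps]. *)
Lemma abs_increment_mul_rho_le t s :
  a <= t <= b -> a <= s <= b ->
  Rabs ((f s - f t) * rho_eps eps (t - s)) <= M' * eps * rho_eps eps (t - s) + 6 * M * eps.
Proof.
  intros Ht Hs.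
  destruct (Linf_norm_spec a b ltac:(lra) f (continuous_on_C1 a b f f' f_C1)) as [HM HMf].
  destruct (Linf_norm_spec a b ltac:(lra) f' (proj2 f_C1)) as [HM' _].
  pose proof (rho_nonneg eps eps_pos eps_lt_1 (t - s)) as Hrho.
  rewrite Rabs_mult, (Rabs_right (rho_eps eps (t - s))) by lra.
  destruct (Rle_dec (Rabs (t - s)) eps) as [Hnear | Hfar].
  - assert (Rabs (f s - f t) <= M' * eps).
    { eapply Rle_trans; [apply (C1_lipschitz a b f f' a_lt_b f_C1 t s Ht Hs)|].
      rewrite Rabs_minus_sym. now apply Rmult_le_compat_l. }
    assert (Rabs (f s - f t) * rho_eps eps (t - s) <= M' * eps * rho_eps eps (t - s))
      by (apply Rmult_le_compat_r; lra).
    nra.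
  - assert (Rabs (f s - f t) <= 2 * M).
    { unfold Rminus. eapply Rle_trans; [apply Rabs_triang|].
      rewrite Rabs_Ropp. pose proof (HMf s Hs). pose proof (HMf t Ht). lra. }
    assert (rho_eps eps (t - s) <= 3 * eps) by (apply rho_tail; lra).
    assert (Rabs (f s - f t) * rho_eps eps (t - s) <= 2 * M * (3 * eps))
      by (apply Rmult_le_compat; [apply Rabs_pos | lra | lra | lra]).
    assert (0 <= M' * eps * rho_eps eps (t - s)) by (apply Rmult_le_pos; nra).
    lra.
Qed.

Lemma ex_RInt_increment_mul_rho t : ex_RInt (fun s => (f s - f t) * rho_eps eps (t - s)) a b.
Proof.
  apply (ex_RInt_sub_mul a b ltac:(lra)).
  - apply (continuous_on_C1 a b f f' f_C1).
  - apply continuous_rho_sub.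
Qed.

Lemma abs_RInt_increment_mul_rho_le t :
  a <= t <= b ->
  Rabs (RInt (fun s => (f s - f t) * rho_eps eps (t - s)) a b)
    <= M' * eps * rho_mass t + 6 * M * eps * (b - a).
Proof.
  intros Ht.
  apply (norm_RInt_le (fun s => (f s - f t) * rho_eps eps (t - s))
           (fun s => M' * eps * rho_eps eps (t - s) + 6 * M * eps) a b); [lra | | |].
  - intros s Hs. now apply abs_increment_mul_rho_le.
  - apply (RInt_correct (V := R_CompleteNormedModule)), ex_RInt_increment_mul_rho.
  - replace (M' * eps * rho_mass t + 6 * M * eps * (b - a))
      with (plus (scal (M' * eps) (rho_mass t)) (scal (b - a) (6 * M * eps)))
      by (unfold plus, scal; simpl; unfold mult; simpl; ring).
    apply (is_RInt_plus (fun s => M' * eps * rho_eps eps (t - s)) (fun _ => 6 * M * eps)).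
    + apply (is_RInt_scal (fun s => rho_eps eps (t - s))), is_RInt_rho; assumption.
    + apply (is_RInt_const (V := R_NormedModule)).
Qed.

Lemma RInt_mul_rho_split t :
  RInt (fun s => f s * rho_eps eps (t - s)) a b
    = RInt (fun s => (f s - f t) * rho_eps eps (t - s)) a b + f t * rho_mass t.
Proof.
  apply is_RInt_unique.
  apply (is_RInt_ext (V := R_NormedModule)
           (fun s => (f s - f t) * rho_eps eps (t - s) + f t * rho_eps eps (t - s))).
  { intros s _. rewrite <- Rmult_plus_distr_r. f_equal. ring. }
  apply (is_RInt_plus (fun s => (f s - f t) * rho_eps eps (t - s))
           (fun s => f t * rho_eps eps (t - s))).
  - apply (RInt_correct (V := R_CompleteNormedModule)), ex_RInt_increment_mul_rho.
  - apply (is_RInt_scal (fun s => rho_eps eps (t - s))), is_RInt_rho; assumption.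
Qed.

Lemma abs_RInt_mul_rho_sub_omega_le t :
  a <= t <= b ->
  Rabs (RInt (fun s => f s * rho_eps eps (t - s)) a b - omega a b eps t * f t)
    <= M' * eps * rho_mass t + 6 * M * eps * (b - a) + M * (2 * (6 * - ln eps * eps + eps)).
Proof.
  intros Ht.
  destruct (Linf_norm_spec a b ltac:(lra) f (continuous_on_C1 a b f f' f_C1)) as [HM HMf].
  rewrite RInt_mul_rho_split.
  replace (RInt (fun s => (f s - f t) * rho_eps eps (t - s)) a b + f t * rho_mass t
           - omega a b eps t * f t)
    with (RInt (fun s => (f s - f t) * rho_eps eps (t - s)) a b
          + f t * (rho_mass t - omega a b eps t)) by ring.
  eapply Rle_trans; [apply Rabs_triang|]. rewrite Rabs_mult.
  apply Rplus_le_compat; [now apply abs_RInt_increment_mul_rho_le|].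
  apply Rmult_le_compat; [apply Rabs_pos | apply Rabs_pos | now apply HMf |].
  now apply abs_rho_mass_sub_omega.
Qed.

End Estimate.

Lemma error_budget M M' J d L eps :
  0 <= M -> 0 <= M' -> 0 < eps -> J <= 2 -> 0 <= d -> 0 <= L -> 1 <= d + L ->
  M' * eps * J + 6 * M * eps * d + M * (2 * (6 * L * eps + eps))
    <= 20 * (M + M') * (d + L) * eps.
Proof.
  intros HM HM' Heps HJ Hd HL HdL.
  assert (0 <= M * eps) by nra. assert (0 <= M' * eps) by nra.
  nra.
Qed.

Theorem lemmaA4 (a b eps : R) (f f' : R -> R)
  (Hab : a < b) (Heps0 : 0 < eps) (Heps1 : eps < Rmin 1 (b - a))
  (Hf : is_C1_on a b f f') :
  forall t, a <= t <= b ->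
    (1 - eps <= omega a b eps t <= 2) /\
    Rabs (RInt (fun s => f s * rho_eps eps (t - s)) a b - omega a b eps t * f t)
      <= 20 * C1_norm a b f f' * (b - a - ln eps) * eps.
Proof.
  intros t Ht.
  assert (eps_lt_1 : eps < 1) by (pose proof (Rmin_l 1 (b - a)); lra).
  assert (eps_lt_ba : eps < b - a) by (pose proof (Rmin_r 1 (b - a)); lra).
  split; [now apply omega_bounds|].
  destruct (Linf_norm_spec a b ltac:(lra) f (continuous_on_C1 a b f f' Hf)) as [HM _].
  destruct (Linf_norm_spec a b ltac:(lra) f' (proj2 Hf)) as [HM' _].
  pose proof (rho_mass_le_2 eps Heps0 eps_lt_1 (t - a) (t - b)) as Hmass.
  pose proof (ln_eps_opp_ge eps Heps0) as HL.
  eapply Rle_trans;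
    [exact (abs_RInt_mul_rho_sub_omega_le a b eps f f' Hab Heps0 eps_lt_1 Hf t Ht)|].
  unfold C1_norm. replace (b - a - ln eps) with ((b - a) + - ln eps) by ring.
  apply error_budget; lra.
Qed.
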